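(* Let $H$ be a weak Hopf algebra and $\pi\colon H\to A$ a partial representation of $H$ in an algebra $A$. The following are equivalent: (1) $\pi(h_1)\pi(S(h_2))=\pi(h_1S(h_2))=\pi(\varepsilon_t(h))$ for all $h\in H$; (2) $\pi(S(h_1))\pi(h_2)=\pi(S(h_1)h_2)=\pi(\varepsilon_s(h))$ for all $h\in H$; (3) $\pi$ is a representation, i.e. an algebra morphism.
   Context: All algebras are associative and unital over a field $\Bbbk$; Sweedler notation $\Delta(h)=h_1\otimes h_2$, $\Delta(1_H)=1_1\otimes1_2$. A weak Hopf algebra is $(H,m,u,\Delta,\varepsilon,S)$ with $H$ an algebra, $(H,\Delta,\varepsilon)$ a coalgebra, and for all $g,h,k$: $\Delta(kh)=\Delta(k)\Delta(h)$; $\varepsilon(kh_1)\varepsilon(h_2g)=\varepsilon(khg)=\varepsilon(kh_2)\varepsilon(h_1g)$; $(1\otimes\Delta(1))(\Delta(1)\otimes1)=\Delta^2(1)=(\Delta(1)\otimes1)(1\otimes\Delta(1))$; $h_1S(h_2)=\varepsilon_t(h)$; $S(h_1)h_2=\varepsilon_s(h)$; $S(h)=S(h_1)h_2S(h_3)$, where $\varepsilon_t(h)=\varepsilon(1_1h)1_2$, $\varepsilon_s(h)=1_1\varepsilon(h1_2)$. A partial representation of $H$ in $A$ is a linear $\pi\colon H\to A$ with, for all $h,k$: (PR1) $\pi(1_H)=1_A$; (PR2) $\pi(h)\pi(k_1)\pi(S(k_2))=\pi(hk_1)\pi(S(k_2))$; (PR3) $\pi(h)\pi(S(k_1))\pi(k_2)=\pi(hS(k_1))\pi(k_2)$;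 (PR4) $\pi(h_1)\pi(S(h_2))\pi(k)=\pi(h_1)\pi(S(h_2)k)$; (PR5) $\pi(S(h_1))\pi(h_2)\pi(k)=\pi(S(h_1))\pi(h_2k)$; (PR6) $\pi(h)=\pi(h_1)\pi(S(h_2))\pi(h_3)$. *)

From HB Require Import structures.
From mathcomp Require Import all_boot all_order all_algebra.
Set Implicit Arguments. Unset Strict Implicit. Unset Printing Implicit Defensive.
Import GRing.Theory.
Local Open Scope ring_scope.

(* Tensors in H (x) H and H (x) H (x) H are represented by finite formal sums,
   i.e. lists of pairs / triples of elements.  Two such formal sums denote the
   same element of the tensor product (over a field) iff all pairs (resp.
   triples) of linear functionals agree on them. *)

Section WeakHopf.
Variable k : fieldType.

Definition lin_functional (V : lmodType k) (f : V -> k) : Prop :=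
  forall (a : k) (x y : V), f (a *: x + y) = a * f x + f y.

Definition lin_map (V W : lmodType k) (f : V -> W) : Prop :=
  forall (a : k) (x y : V), f (a *: x + y) = a *: f x + f y.

Variable H : algType k.

Definition teq2 (s t : seq (H * H)) : Prop :=
  forall f g : H -> k, lin_functional f -> lin_functional g ->
    \sum_(p <- s) f p.1 * g p.2 = \sum_(p <- t) f p.1 * g p.2.

Definition teq3 (s t : seq (H * H * H)) : Prop :=
  forall f g l : H -> k,
    lin_functional f -> lin_functional g -> lin_functional l ->
    \sum_(p <- s) f p.1.1 * g p.1.2 * l p.2 =
    \sum_(p <- t) f p.1.1 * g p.1.2 * l p.2.

Definition tmul2 (s t : seq (H * H)) : seq (H * H) :=
  [seq (p.1 * q.1, p.2 * q.2) | p <- s, q <- t].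
Definition tmul3 (s t : seq (H * H * H)) : seq (H * H * H) :=
  [seq (p.1.1 * q.1.1, p.1.2 * q.1.2, p.2 * q.2) | p <- s, q <- t].

Variable cop : H -> seq (H * H).
Variable eps : H -> k.
Variable S : H -> H.

Definition cop2 (h : H) : seq (H * H * H) :=
  flatten [seq [seq (q.1, q.2, p.2) | q <- cop p.1] | p <- cop h].
Definition cop2' (h : H) : seq (H * H * H) :=
  flatten [seq [seq (p.1, q.1, q.2) | q <- cop p.2] | p <- cop h].

Definition eps_t (h : H) : H := \sum_(p <- cop 1) eps (p.1 * h) *: p.2.
Definition eps_s (h : H) : H := \sum_(p <- cop 1) eps (h * p.2) *: p.1.

Definition weak_hopf : Prop :=
  [/\
      forall (a : k) (x y : H),
        teq2 (cop (a *: x + y)) ([seq (a *: p.1, p.2) | p <- cop x] ++ cop y),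
      lin_functional eps,
      forall h, teq3 (cop2 h) (cop2' h),
      forall h, \sum_(p <- cop h) eps p.1 *: p.2 = h /\
                \sum_(p <- cop h) eps p.2 *: p.1 = h &
   [/\
      lin_map S,
      forall x y, teq2 (cop (x * y)) (tmul2 (cop x) (cop y)),
      forall x y z,
        (\sum_(p <- cop y) eps (x * p.1) * eps (p.2 * z) = eps (x * y * z)) /\
        (eps (x * y * z) = \sum_(p <- cop y) eps (x * p.2) * eps (p.1 * z)),
      teq3 (tmul3 [seq (1, q.1, q.2) | q <- cop 1] [seq (p.1, p.2, 1) | p <- cop 1])
           (cop2 1) /\
      teq3 (cop2 1)
           (tmul3 [seq (p.1, p.2, 1) | p <- cop 1] [seq (1, q.1, q.2) | q <- cop 1]) &
      [/\ forall h, \sum_(p <- cop h) p.1 * S p.2 = eps_t h,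
          forall h, \sum_(p <- cop h) S p.1 * p.2 = eps_s h &
          forall h, S h = \sum_(p <- cop2 h) S p.1.1 * p.1.2 * S p.2]]].

Variable A : algType k.
Variable pi : H -> A.

Definition partial_rep : Prop :=
  [/\ lin_map pi,
      pi 1 = 1,
      forall h x, \sum_(p <- cop x) pi h * pi p.1 * pi (S p.2)
                          = \sum_(p <- cop x) pi (h * p.1) * pi (S p.2),
      forall h x, \sum_(p <- cop x) pi h * pi (S p.1) * pi p.2
                          = \sum_(p <- cop x) pi (h * S p.1) * pi p.2 &
   [/\ forall h x, \sum_(p <- cop h) pi p.1 * pi (S p.2) * pi x
                           = \sum_(p <- cop h) pi p.1 * pi (S p.2 * x),
       forall h x, \sum_(p <- cop h) pi (S p.1) * pi p.2 * pi x
                           = \sum_(p <- cop h) pi (S p.1) * pi (p.2 * x) &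
       forall h, pi h = \sum_(p <- cop2 h) pi p.1.1 * pi (S p.1.2) * pi p.2]].

End WeakHopf.

(* PR6, coassociativity and PR5 give
   π(x) π(y) = π(x_1) π(S x_2) π(x_3 y), so under (1)
   π(x) π(y) = π(ε_t(x_1)) π(x_2 y), and for y = 1 also π(x) = π(ε_t(x_1)) π(x_2).
   Applying the latter to xy and using the weak bialgebra identity
   ε_t((xy)_1) ⊗ (xy)_2 = ε_t(x_1) ⊗ x_2 y gives π(xy) = π(x) π(y).  That identity
   reduces to ε(z (xy)_1) (xy)_2 = ε(z x_1) x_2 y, which follows from the weak
   counit axiom and 1_1 ⊗ ε(1_2 y_1) y_2 = 1_1 ⊗ 1_2 y, a consequence of the weak
   unit axiom, coassociativity and the counit.
   Condition (2) for π is condition (1) for π seen as a partial representation of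
   H^{op,cop} in A^op, whose ε_t is ε_s, so (2) ⇒ (3) is the same argument; (3)
   implies (1) and (2) by the antipode axioms.  To
   apply the axioms to arbitrary multilinear maps, the finitely many vectors
   involved are expanded in a finite biorthogonal system whose functionals are
   defined on all of H, which needs Zorn's lemma. *)

From HB Require Import structures.
From mathcomp Require Import all_boot all_order all_algebra.
From mathcomp Require Import boolp classical_sets.
Import GRing.Theory.
Local Open Scope ring_scope.
Set Implicit Arguments. Unset Strict Implicit. Unset Printing Implicit Defensive.

(** * Linear algebra *)

Section LinearMaps.
Variable k : fieldType.
Implicit Types U V W : lmodType k.

Lemma lin_mapZ U V (g : U -> V) : lin_map g -> forall c x, g (c *: x) = c *: g x.
Proof. by move=> lg c x; rewrite (scalable_linear lg). Qed.

Lemma lin_mapB U V (g : U -> V) : lin_map g -> forall x y, g (x - y) = g x - g y.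
Proof. exact: zmod_morphism_linear. Qed.

Lemma lin_map_sum U V (g : U -> V) : lin_map g ->
  forall I (r : seq I) (F : I -> U), g (\sum_(i <- r) F i) = \sum_(i <- r) g (F i).
Proof.
move=> lg I r F.
exact: (linear_sum (HB.pack g (GRing.isLinear.Build k U V *:%R g lg))).
Qed.

Lemma lin_functional_sum U (g : U -> k) : lin_functional g ->
  forall I (r : seq I) (F : I -> U), g (\sum_(i <- r) F i) = \sum_(i <- r) g (F i).
Proof. exact: (@lin_map_sum U k^o). Qed.

Lemma lin_functionalZ U (g : U -> k) : lin_functional g -> forall c x, g (c *: x) = c * g x.
Proof. exact: (@lin_mapZ U k^o). Qed.

Lemma lin_functionalB U (g : U -> k) : lin_functional g -> forall x y, g (x - y) = g x - g y.
Proof. exact: (@lin_mapB U k^o). Qed.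
End LinearMaps.

Section Separation.
Local Open Scope classical_set_scope.
Variables (k : fieldType) (V : lmodType k).
Implicit Types (M W : set V) (a v : V).

Definition subspace M := M 0 /\ forall c x y, M x -> M y -> M (c *: x + y).

Lemma subspaceZ M c x : subspace M -> M x -> M (c *: x).
Proof. by case=> M0 MC Mx; rewrite -[_ *: _]addr0; apply: MC. Qed.

Lemma subspaceD M x y : subspace M -> M x -> M y -> M (x + y).
Proof. by case=> _ MC Mx My; rewrite -[x]scale1r; apply: MC. Qed.

Lemma subspace_chain W (F : set (set V)) :
  subspace W -> (forall X, F X -> subspace (X `|` W)) -> total_on F subset ->
  subspace (\bigcup_(X in F) X `|` W).
Proof.
move=> [W0 WC] FW Ftot; split=> [|c x y]; first by right.
have common z1 z2 : (\bigcup_(X in F) X `|` W) z1 -> (\bigcup_(X in F) X `|` W) z2 ->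
    (W z1 /\ W z2) \/ exists2 Z, F Z & (Z `|` W) z1 /\ (Z `|` W) z2.
  case=> [[X FX Xz1]|Wz1] [[Y FY Yz2]|Wz2]; [right|right|right|by left].
  - have [XY|YX] := Ftot X Y FX FY.
    + by exists Y => //; split; left => //; apply: XY.
    + by exists X => //; split; left => //; apply: YX.
  - by exists X => //; split; [left|right].
  - by exists Y => //; split; [right|left].
move=> Ux Uy; case: (common x y Ux Uy) => [[Wx Wy]|[Z FZ [Zx Zy]]].
  by right; apply: WC.
by case: ((FW Z FZ).2 c x y Zx Zy) => [Zz|Wz]; [left; exists Z|right].
Qed.

Lemma subspace_add_line M v : subspace M ->
  subspace (fun z => exists w c, M w /\ z = w + c *: v).
Proof.
move=> sM; split; first by exists 0, 0; rewrite scale0r addr0; split => //; case: sM.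
move=> c _ _ [w1 [c1 [Mw1 ->]]] [w2 [c2 [Mw2 ->]]].
exists (c *: w1 + w2), (c * c1 + c2); split; first by case: sM => _; apply.
by rewrite scalerDr scalerDl scalerA addrACA.
Qed.

Lemma exists_hyperplane W a : subspace W -> ~ W a ->
  exists M, [/\ subspace M, W `<=` M, ~ M a & forall v, exists c, M (v - c *: a)].
Proof.
move=> sW Wa.
(* Zorn is applied to the N with N `|` W a subspace avoiding a, so that the
   empty chain has an upper bound. *)
pose P N := subspace (N `|` W) /\ ~ (N `|` W) a.
have [N [[sN Na] Nmax]] : exists N, P N /\ forall N', N `<` N' -> ~ P N'.
  apply: Zorn_bigcup => F FP Ftot; split.
    by apply: subspace_chain => // X /FP[].
  by case=> [[X /FP[_ Xa] ?]|//]; apply: Xa; left.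
exists (N `|` W); split=> //.
move=> v; apply: contrapT => nv.
pose N' := fun z => exists w c, (N `|` W) w /\ z = w + c *: v.
have NN' : N `<=` N' by move=> z Nz; exists z, 0; rewrite scale0r addr0; split => //; left.
have WN' : W `<=` N' by move=> z Wz; exists z, 0; rewrite scale0r addr0; split => //; right.
apply: (Nmax N'); first split=> //.
  move=> N'N; apply: nv; exists 0; rewrite scale0r subr0; left; apply: N'N.
  by exists 0, 1; rewrite scale1r add0r; split => //; right; case: sW.
rewrite /P.
have -> : N' `|` W = N' by apply/seteqP; split=> z; [case=> // /WN'|left].
split; first exact: subspace_add_line.
case=> w [c [Nw ea]]; have [c0|cn0] := eqVneq c 0.
  by apply: Na; move: ea; rewrite c0 scale0r addr0 => ->.
apply: nv; exists c^-1; suff -> : v - c^-1 *: a = (- c^-1) *: w by apply: subspaceZ.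
by rewrite ea scalerDr scalerA mulVf // scale1r scaleNr opprD addrCA subrr addr0.
Qed.

Lemma separating_functional W a : subspace W -> ~ W a ->
  exists phi : V -> k, [/\ lin_functional phi, phi a = 1 & forall w, W w -> phi w = 0].
Proof.
move=> sW Wa; have [M [sM WM Ma Mcoord]] := exists_hyperplane sW Wa.
have [phi Mphi] := choice Mcoord.
have phiP v c : M (v - c *: a) -> phi v = c.
  move=> Mc; apply/eqP; rewrite eq_sym -subr_eq0; apply/negP => /negP ne; apply: Ma.
  rewrite -[a]scale1r -(mulVf ne) -scalerA; apply: subspaceZ => //.
  have -> : (c - phi v) *: a = (v - phi v *: a) - (v - c *: a).
    by rewrite scalerBl opprD opprK addrACA subrr add0r addrC.
  by apply: subspaceD => //; rewrite -scaleN1r; apply: subspaceZ.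
exists phi; split=> [c x y||w Ww]; apply: phiP.
- have -> : c *: x + y - (c * phi x + phi y) *: a =
            c *: (x - phi x *: a) + (y - phi y *: a).
    by rewrite scalerDl scalerBr scalerA opprD addrACA.
  by case: sM => _; apply.
- by rewrite scale1r subrr; case: sM.
- by rewrite scale0r subr0; apply: WM.
Qed.
End Separation.

Section DualSystem.
Variables (k : fieldType) (V : lmodType k).

Definition dual_system (m : nat) (e : nat -> V) (f : nat -> V -> k) :=
  (forall j, lin_functional (f j)) /\
  forall j l, (j < m)%N -> (l < m)%N -> f j (e l) = (j == l)%:R.

Section Projection.
Variables (m : nat) (e : nat -> V) (f : nat -> V -> k).
Hypothesis dual : dual_system m e f.

Let proj y := \sum_(j < m) f j y *: e j.

Lemma coord_proj j y : (j < m)%N -> f j (proj y) = f j y.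
Proof.
move=> jm; case: dual => lf fe; rewrite (lin_functional_sum (lf j)).
rewrite (bigD1 (Ordinal jm)) //= big1 => [|i ij].
  by rewrite (lin_functionalZ (lf j)) fe // eqxx mulr1 addr0.
rewrite (lin_functionalZ (lf j)) fe //; case: eqP => [ji|_]; last by rewrite mulr0.
by case/eqP: ij; apply: val_inj.
Qed.

Lemma lin_map_proj : lin_map proj.
Proof.
move=> c y z; rewrite /proj scaler_sumr -big_split /=; apply: eq_bigr => j _.
by case: dual => lf _; rewrite lf scalerDl scalerA.
Qed.

Lemma proj_idem y : proj (proj y) = proj y.
Proof. by apply: eq_bigr => j _; rewrite coord_proj. Qed.

Lemma proj_basis l : (l < m)%N -> proj (e l) = e l.
Proof.
move=> lm; case: dual => _ fe; rewrite /proj (bigD1 (Ordinal lm)) //= fe // eqxx scale1r.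
rewrite big1 ?addr0 // => i il; rewrite fe //; case: eqP => [li|_]; last by rewrite scale0r.
by case/eqP: il; apply: val_inj.
Qed.

Lemma subspace_proj_fixed : subspace (fun z => proj z = z).
Proof.
split=> [|c y z Py Pz]; last by rewrite lin_map_proj Py Pz.
by rewrite -(subrr 0) (lin_mapB lin_map_proj) !subrr.
Qed.

Lemma dual_system_extend x : exists m' e' f', dual_system m' e' f' /\
  forall y, y = proj y \/ y = x -> y = \sum_(j < m') f' j y *: e' j.
Proof.
have [xP|xnP] := eqVneq (proj x) x.
  by exists m, e, f; split=> // y [|->].
pose x' := x - proj x.
have projx' : proj x' = 0 by rewrite /x' (lin_mapB lin_map_proj) proj_idem subrr.
have [phi [lphi phix' phiW]] : exists phi : V -> k,
    [/\ lin_functional phi, phi x' = 1 & forall w, proj w = w -> phi w = 0].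
  apply: separating_functional subspace_proj_fixed _ => fixx'; case/eqP: xnP.
  by apply/esym/subr0_eq; rewrite -/x' -fixx' projx'.
case: dual => lf fe.
exists m.+1, (fun j => if j == m then x' else e j), (fun j => if j == m then phi else f j).
split; first split.
- by move=> j; case: eqP.
- move=> j l; rewrite !ltnS [(j <= m)%N]leq_eqVlt [(l <= m)%N]leq_eqVlt.
  move=> /predU1P[->|jm] /predU1P[->|lm].
  + by rewrite eqxx phix'.
  + by rewrite eqxx (ltn_eqF lm) (gtn_eqF lm) phiW ?proj_basis.
  + by rewrite eqxx (ltn_eqF jm) /x' (lin_functionalB (lf j)) coord_proj ?subrr.
  + by rewrite (ltn_eqF jm) (ltn_eqF lm) fe.
move=> y yx; rewrite big_ord_recr /= eqxx.
under eq_bigr => j _ do rewrite (ltn_eqF (ltn_ord j)).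
case: yx => [yP|->].
  by rewrite phiW ?scale0r ?addr0 // -yP.
have -> : phi x = 1.
  by rewrite -[x](subrK (proj x)) -/x' -[x']scale1r lphi phix' phiW ?proj_idem // mulr1 addr0.
by rewrite scale1r addrC subrK.
Qed.

End Projection.

Lemma dual_system_span (L : seq V) : exists m e f, dual_system m e f /\
  {in L, forall x, x = \sum_(j < m) f j x *: e j}.
Proof.
elim: L => [|x L [m [e [f [dual rep]]]]].
  exists 0%N, (fun _ => 0), (fun _ _ => 0); split=> //.
  by split=> // j c y z; rewrite mulr0 addr0.
have [m' [e' [f' [dual' rep']]]] := dual_system_extend dual x.
exists m', e', f'; split=> // y; rewrite inE => /predU1P[->|yL]; apply: rep'.
  by right.
by left; apply: rep.
Qed.
End DualSystem.

Section Multilinear.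
Variable k : fieldType.
Implicit Types U V W : lmodType k.

Definition bilinear_map U1 U2 V (B : U1 -> U2 -> V) :=
  (forall b, lin_map (B^~ b)) /\ (forall a, lin_map (B a)).

Definition trilinear_map U1 U2 U3 V (T : U1 -> U2 -> U3 -> V) :=
  [/\ forall b c, lin_map (fun a => T a b c), forall a c, lin_map (fun b => T a b c)
    & forall a b, lin_map (T a b)].

Lemma lin_map_id U : lin_map (fun x : U => x).
Proof. by []. Qed.

Lemma lin_map_comp U V W (g : V -> W) (h : U -> V) :
  lin_map g -> lin_map h -> lin_map (fun x => g (h x)).
Proof. by move=> lg lh a x y; rewrite lh lg. Qed.

Lemma lin_functional_comp U V (g : V -> k) (h : U -> V) :
  lin_functional g -> lin_map h -> lin_functional (fun x => g (h x)).
Proof. by move=> lg lh a x y; rewrite lh lg. Qed.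

Lemma lin_map_sumf U V I (r : seq I) (F : I -> U -> V) :
  (forall i, lin_map (F i)) -> lin_map (fun x => \sum_(i <- r) F i x).
Proof.
by move=> lF a x y; rewrite scaler_sumr -big_split; apply: eq_bigr => i _; apply: lF.
Qed.

Lemma lin_map_scalel U V (c : U -> k) (v : V) :
  lin_functional c -> lin_map (fun x => c x *: v).
Proof. by move=> lc a x y; rewrite lc scalerDl scalerA. Qed.

Lemma lin_map_scaler U V a (g : U -> V) : lin_map g -> lin_map (fun x => a *: g x).
Proof. by move=> lg b x y; rewrite lg scalerDr !scalerA mulrC. Qed.

Lemma lin_map_mull U (A : algType k) (a : A) (g : U -> A) :
  lin_map g -> lin_map (fun x => a * g x).
Proof. by move=> lg b x y; rewrite lg mulrDr scalerAr. Qed.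

Lemma lin_map_mulr U (A : algType k) (a : A) (g : U -> A) :
  lin_map g -> lin_map (fun x => g x * a).
Proof. by move=> lg b x y; rewrite lg mulrDl scalerAl. Qed.
End Multilinear.

Ltac lin_map_rec n :=
  lazymatch n with
  | O => fail
  | S ?n => first
    [ assumption
    | match goal with hyp : forall _, lin_map _ |- _ => apply: hyp end
    | apply: lin_map_id
    | apply: lin_map_sumf => ? /=; lin_map_rec n
    | apply: lin_map_scalel; lin_map_rec n
    | apply: lin_map_scaler; lin_map_rec n
    | apply: lin_map_mull; lin_map_rec n
    | apply: lin_map_mulr; lin_map_rec n
    | apply: lin_functional_comp; [lin_map_rec n | lin_map_rec n]
    | apply: lin_map_comp; [lin_map_rec n | lin_map_rec n] ]
  end.

Ltac multilinear :=
  lazymatch goal with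
  (* [8%N]: a bare numeral would be read in [ring_scope]. *)
  | |- bilinear_map _ => split=> ? /=; lin_map_rec 8%N
  | |- trilinear_map _ => split=> ? ? /=; lin_map_rec 8%N
  | _ => lin_map_rec 8%N
  end.

Section TensorEquality.
Variables (k : fieldType) (H : algType k).

Lemma teq2_bilinear (s t : seq (H * H)) : teq2 s t ->
  forall (V : lmodType k) (B : H -> H -> V), bilinear_map B ->
  \sum_(p <- s) B p.1 p.2 = \sum_(p <- t) B p.1 p.2.
Proof.
move=> st V B [lB1 lB2].
pose L := [seq p.1 | p <- s ++ t] ++ [seq p.2 | p <- s ++ t].
have [m [e [f [[lf _] rep]]]] := dual_system_span L.
have expand x y : x \in L -> y \in L ->
    B x y = \sum_(j < m) \sum_(l < m) (f j x * f l y) *: B (e j) (e l).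
  move=> xL yL; rewrite {1}(rep x xL) (lin_map_sum (lB1 _)); apply: eq_bigr => j _.
  rewrite (lin_mapZ (lB1 _)) {1}(rep y yL) (lin_map_sum (lB2 _)) scaler_sumr.
  by apply: eq_bigr => l _; rewrite (lin_mapZ (lB2 _)) scalerA.
have expand_sum r : {subset r <= s ++ t} -> \sum_(p <- r) B p.1 p.2 =
    \sum_(j < m) \sum_(l < m) (\sum_(p <- r) f j p.1 * f l p.2) *: B (e j) (e l).
  move=> rst; under eq_big_seq => p /rst pst do
    rewrite expand ?mem_cat ?map_f ?orbT //.
  rewrite exchange_big; apply: eq_bigr => j _; rewrite exchange_big.
  by apply: eq_bigr => l _; rewrite scaler_suml.
rewrite (expand_sum s (mem_subseq (prefix_subseq s t))).
rewrite (expand_sum t (mem_subseq (suffix_subseq s t))).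
by apply: eq_bigr => j _; apply: eq_bigr => l _; rewrite (st _ _ (lf j) (lf l)).
Qed.

Lemma teq3_trilinear (s t : seq (H * H * H)) : teq3 s t ->
  forall (V : lmodType k) (T : H -> H -> H -> V), trilinear_map T ->
  \sum_(p <- s) T p.1.1 p.1.2 p.2 = \sum_(p <- t) T p.1.1 p.1.2 p.2.
Proof.
move=> st V T [lT1 lT2 lT3].
pose L := [seq p.1.1 | p <- s ++ t] ++ [seq p.1.2 | p <- s ++ t] ++ [seq p.2 | p <- s ++ t].
have [m [e [f [[lf _] rep]]]] := dual_system_span L.
have inL p : p \in s ++ t -> [/\ p.1.1 \in L, p.1.2 \in L & p.2 \in L].
  move=> pst; split; rewrite !mem_cat; apply/or3P.
  - by apply: Or31; apply: map_f.
  - by apply: Or32; apply: map_f.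
  - by apply: Or33; apply: map_f.
have expand x y z : x \in L -> y \in L -> z \in L -> T x y z =
    \sum_(i < m) \sum_(j < m) \sum_(l < m) (f i x * f j y * f l z) *: T (e i) (e j) (e l).
  move=> xL yL zL; rewrite {1}(rep x xL) (lin_map_sum (lT1 _ _)); apply: eq_bigr => i _.
  rewrite (lin_mapZ (lT1 _ _)) {1}(rep y yL) (lin_map_sum (lT2 _ _)) scaler_sumr.
  apply: eq_bigr => j _; rewrite (lin_mapZ (lT2 _ _)) {1}(rep z zL).
  rewrite (lin_map_sum (lT3 _ _)) !scaler_sumr; apply: eq_bigr => l _.
  by rewrite (lin_mapZ (lT3 _ _)) !scalerA.
have expand_sum r : {subset r <= s ++ t} -> \sum_(p <- r) T p.1.1 p.1.2 p.2 =
    \sum_(i < m) \sum_(j < m) \sum_(l < m)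
      (\sum_(p <- r) f i p.1.1 * f j p.1.2 * f l p.2) *: T (e i) (e j) (e l).
  move=> rst; under eq_big_seq => p /rst /inL[xL yL zL] do rewrite expand //.
  rewrite exchange_big; apply: eq_bigr => i _; rewrite exchange_big.
  apply: eq_bigr => j _; rewrite exchange_big.
  by apply: eq_bigr => l _; rewrite scaler_suml.
rewrite (expand_sum s (mem_subseq (prefix_subseq s t))).
rewrite (expand_sum t (mem_subseq (suffix_subseq s t))).
apply: eq_bigr => i _; apply: eq_bigr => j _; apply: eq_bigr => l _.
by rewrite (st _ _ _ (lf i) (lf j) (lf l)).
Qed.
End TensorEquality.

(** * Weak bialgebras *)

Section SweedlerSums.
Variables (k : fieldType) (H : algType k).
Implicit Types cop : H -> seq (H * H).

Definition cop_multiplicative cop := forall (V : lmodType k) (B : H -> H -> V) x y,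
  bilinear_map B -> \sum_(p <- cop (x * y)) B p.1 p.2 =
    \sum_(p <- cop x) \sum_(q <- cop y) B (p.1 * q.1) (p.2 * q.2).

Definition coassociative cop := forall (V : lmodType k) (T : H -> H -> H -> V) h,
  trilinear_map T -> \sum_(p <- cop h) \sum_(q <- cop p.1) T q.1 q.2 p.2 =
    \sum_(p <- cop h) \sum_(q <- cop p.2) T p.1 q.1 q.2.

(* Δ²(1) = (Δ(1) ⊗ 1)(1 ⊗ Δ(1)) *)
Definition weak_unit cop := forall (V : lmodType k) (T : H -> H -> H -> V),
  trilinear_map T -> \sum_(p <- cop 1) \sum_(q <- cop p.1) T q.1 q.2 p.2 =
    \sum_(p <- cop 1) \sum_(q <- cop 1) T p.1 (p.2 * q.1) q.2.

Lemma big_cop2 cop (V : lmodType k) (F : H * H * H -> V) h :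
  \sum_(p <- cop2 cop h) F p = \sum_(p <- cop h) \sum_(q <- cop p.1) F (q.1, q.2, p.2).
Proof. by rewrite big_flatten big_map; apply: eq_bigr => p _; rewrite big_map. Qed.

Lemma big_cop2' cop (V : lmodType k) (F : H * H * H -> V) h :
  \sum_(p <- cop2' cop h) F p = \sum_(p <- cop h) \sum_(q <- cop p.2) F (p.1, q.1, q.2).
Proof. by rewrite big_flatten big_map; apply: eq_bigr => p _; rewrite big_map. Qed.

Lemma teq_cop_multiplicative cop :
  (forall x y, teq2 (cop (x * y)) (tmul2 (cop x) (cop y))) -> cop_multiplicative cop.
Proof.
by move=> copM V B x y lB; rewrite (teq2_bilinear (copM x y) lB) big_allpairs_dep.
Qed.

Lemma teq_coassociative cop :
  (forall h, teq3 (cop2 cop h) (cop2' cop h)) -> coassociative cop.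
Proof.
move=> coass V T h lT; pose F (p : H * H * H) := T p.1.1 p.1.2 p.2.
by rewrite -(big_cop2 _ F) -(big_cop2' _ F); apply: teq3_trilinear.
Qed.

Lemma teq_weak_unit cop :
  teq3 (cop2 cop 1)
    (tmul3 [seq (p.1, p.2, 1) | p <- cop 1] [seq (1, q.1, q.2) | q <- cop 1]) ->
  weak_unit cop.
Proof.
move=> wu V T lT; pose F (p : H * H * H) := T p.1.1 p.1.2 p.2.
rewrite -(big_cop2 _ F) (teq3_trilinear wu lT) big_allpairs_dep big_map.
by apply: eq_bigr => p _; rewrite big_map; apply: eq_bigr => q _; rewrite /= mulr1 mul1r.
Qed.
End SweedlerSums.

Section WeakBialgebra.
Variables (k : fieldType) (H : algType k).

(* The axioms of weak_hopf used below, with tensor equalities tested against all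
   multilinear maps; keeping both halves of the counit axioms makes the notion
   stable under passing to H^{op,cop}. *)
Record weak_bialgebra (cop : H -> seq (H * H)) (eps : H -> k) : Prop := WeakBialgebra {
  wb_eps_lin : lin_functional eps;
  wb_cop_mul : cop_multiplicative cop;
  wb_coassoc : coassociative cop;
  wb_weak_unit : weak_unit cop;
  wb_counit : forall h,
    \sum_(p <- cop h) eps p.1 *: p.2 = h /\ \sum_(p <- cop h) eps p.2 *: p.1 = h;
  wb_weak_counit : forall x y z,
    \sum_(p <- cop y) eps (x * p.1) * eps (p.2 * z) = eps (x * y * z) /\
    eps (x * y * z) = \sum_(p <- cop y) eps (x * p.2) * eps (p.1 * z) }.

Lemma weak_hopf_bialgebra cop eps S : weak_hopf cop eps S -> weak_bialgebra cop eps.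
Proof.
case=> _ eps_lin coassoc counit [_ cop_mul weak_counit [_ wunit] _]; split => //.
- exact: teq_cop_multiplicative.
- exact: teq_coassociative.
- exact: teq_weak_unit.
Qed.

Section Identities.
Variables (cop : H -> seq (H * H)) (eps : H -> k).
Hypothesis wb : weak_bialgebra cop eps.

Lemma big_cop1_counit (V : lmodType k) (T : H -> H -> V) y : bilinear_map T ->
  \sum_(r <- cop 1) \sum_(q <- cop y) eps (r.2 * q.1) *: T r.1 q.2 =
  \sum_(r <- cop 1) T r.1 (r.2 * y).
Proof.
case=> lT1 lT2; have eps_lin := wb_eps_lin wb.
pose G a b c := \sum_(q <- cop y) eps (b * q.1) *: T a (c * q.2).
have lG : trilinear_map G by rewrite /G; multilinear.
transitivity (\sum_(r <- cop 1) \sum_(r' <- cop 1) G r.1 (r.2 * r'.1) r'.2).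
  apply: eq_bigr => r _; rewrite -{1}[y]mul1r.
  rewrite (wb_cop_mul wb (B := fun a b => eps (r.2 * a) *: T r.1 b)); last by multilinear.
  by apply: eq_bigr => r' _; apply: eq_bigr => q _; rewrite mulrA.
rewrite -(wb_weak_unit wb lG) (wb_coassoc wb (T := G)) //; apply: eq_bigr => p _.
rewrite -(wb_cop_mul wb (B := fun a b => eps a *: T p.1 b)); last by multilinear.
rewrite -{2}[p.2 * y](proj1 (wb_counit wb _)) (lin_map_sum (lT2 _)).
by apply: eq_bigr => u _; rewrite (lin_mapZ (lT2 _)).
Qed.

Lemma eps_cop_mulr x y z :
  \sum_(p <- cop (x * y)) eps (z * p.1) *: p.2 = (\sum_(p <- cop x) eps (z * p.1) *: p.2) * y.
Proof.
have eps_lin := wb_eps_lin wb.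
rewrite -{2}[x]mulr1 !(wb_cop_mul wb (B := fun a b => eps (z * a) *: b)); try by multilinear.
rewrite mulr_suml; apply: eq_bigr => p _; rewrite mulr_suml.
pose T c d := eps (z * p.1 * c) *: (p.2 * d).
have lT : bilinear_map T by rewrite /T; multilinear.
transitivity (\sum_(r <- cop 1) \sum_(q <- cop y) eps (r.2 * q.1) *: T r.1 q.2).
  rewrite exchange_big; apply: eq_bigr => q _ /=.
  rewrite mulrA -[z * p.1]mulr1 -(proj1 (wb_weak_counit wb _ _ _)) scaler_suml.
  by apply: eq_bigr => r _; rewrite /T scalerA mulrC.
rewrite big_cop1_counit //; apply: eq_bigr => r _.
by rewrite /T -scalerAl !mulrA.
Qed.

Lemma big_eps_t_cop_mul (V : lmodType k) (B : H -> H -> V) x y : bilinear_map B ->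
  \sum_(p <- cop (x * y)) B (eps_t cop eps p.1) p.2 =
  \sum_(p <- cop x) B (eps_t cop eps p.1) (p.2 * y).
Proof.
case=> lB1 lB2.
have expand r (G : H * H -> H) : \sum_(p <- r) B (eps_t cop eps p.1) (G p) =
    \sum_(s <- cop 1) B s.2 (\sum_(p <- r) eps (s.1 * p.1) *: G p).
  under eq_bigr => p _ do rewrite (lin_map_sum (lB1 _)).
  rewrite exchange_big; apply: eq_bigr => s _; rewrite (lin_map_sum (lB2 _)).
  by apply: eq_bigr => p _; rewrite (lin_mapZ (lB1 _)) (lin_mapZ (lB2 _)).
rewrite (expand _ snd) (expand _ (fun p => p.2 * y)); apply: eq_bigr => s _.
by rewrite eps_cop_mulr mulr_suml; congr (B _ _); apply: eq_bigr => p _; rewrite scalerAl.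
Qed.
End Identities.
End WeakBialgebra.

(** * Partial representations *)

Section PartialRep.
Variables (k : fieldType) (H : algType k) (cop : H -> seq (H * H)) (eps : H -> k).
Variables (S : H -> H) (A : algType k) (pi : H -> A).
Hypotheses (wb : weak_bialgebra cop eps) (S_lin : lin_map S) (pr : partial_rep cop S pi).

Lemma partial_rep_mulE x y : pi x * pi y =
  \sum_(p <- cop x) \sum_(q <- cop p.1) pi q.1 * pi (S q.2) * pi (p.2 * y).
Proof.
case: pr => pi_lin _ _ _ [_ pr5 pr6].
rewrite {1}pr6 big_cop2 mulr_suml.
transitivity (\sum_(p <- cop x) \sum_(q <- cop p.2) pi p.1 * pi (S q.1) * pi q.2 * pi y).
  rewrite -(wb_coassoc wb (T := fun a b c => pi a * pi (S b) * pi c * pi y)).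
    by apply: eq_bigr => p _; rewrite mulr_suml.
  by multilinear.
rewrite (wb_coassoc wb (T := fun a b c => pi a * pi (S b) * pi (c * y))); last by multilinear.
apply: eq_bigr => p _.
transitivity (pi p.1 * \sum_(q <- cop p.2) pi (S q.1) * pi q.2 * pi y).
  by rewrite mulr_sumr; apply: eq_bigr => q _; rewrite !mulrA.
by rewrite pr5 mulr_sumr; apply: eq_bigr => q _; rewrite !mulrA.
Qed.

Lemma multiplicative_of_eps_t :
  (forall h, \sum_(p <- cop h) pi p.1 * pi (S p.2) = pi (eps_t cop eps h)) ->
  forall x y, pi (x * y) = pi x * pi y.
Proof.
move=> pi_eps_t; case: (pr) => pi_lin pi1 _ _ _.
have mulE x y : pi x * pi y = \sum_(p <- cop x) pi (eps_t cop eps p.1) * pi (p.2 * y).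
  by rewrite partial_rep_mulE; apply: eq_bigr => p _; rewrite -pi_eps_t mulr_suml.
move=> x y; rewrite -[pi (x * y)]mulr1 -pi1 mulE.
under eq_bigr => p _ do rewrite mulr1.
by rewrite (big_eps_t_cop_mul wb (B := fun a b => pi a * pi b)) -?mulE //; multilinear.
Qed.
End PartialRep.

(** * The opposite weak bialgebra *)

(* ssralg equips the converse R^c with a ring structure only. *)
HB.instance Definition _ (k : pzRingType) (V : lmodType k) := GRing.Lmodule.on V^c.
HB.instance Definition _ (k : pzRingType) (A : algType k) :=
  GRing.Lmodule_isLalgebra.Build k A^c (fun a (u v : A) => scalerAr a v u).
HB.instance Definition _ (k : pzRingType) (A : algType k) :=
  GRing.Lalgebra_isAlgebra.Build k A^c (fun a (u v : A) => scalerAl a v u).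

Lemma mulrcE (R : pzSemiRingType) (x y : R^c) : x * y = (y : R) * x.
Proof. by []. Qed.

Section Opposite.
Variables (k : fieldType) (H : algType k).

(* The comultiplication of H^{op,cop}, whose multiplication is that of H^c. *)
Definition cop_op (cop : H -> seq (H * H)) (h : H^c) : seq (H^c * H^c) :=
  [seq (p.2, p.1) | p <- cop h].

Lemma big_cop_op cop (V : nmodType) (F : H^c * H^c -> V) h :
  \sum_(p <- cop_op cop h) F p = \sum_(p <- cop h) F (p.2, p.1).
Proof. exact: big_map. Qed.

Lemma eps_t_op cop eps h : eps_t (cop_op cop) eps h = eps_s cop eps h.
Proof. exact: big_map. Qed.

Lemma weak_bialgebra_op cop eps :
  weak_bialgebra cop eps -> weak_bialgebra (cop_op cop) eps.
Proof.
case=> eps_lin cop_mul coassoc wunit counit weak_counit.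
have coassoc_rev (V : lmodType k) (T : H -> H -> H -> V) h : trilinear_map T ->
    \sum_(p <- cop_op cop h) \sum_(q <- cop_op cop p.1) T q.1 q.2 p.2 =
    \sum_(p <- cop h) \sum_(q <- cop p.1) T p.2 q.2 q.1.
  case=> lT1 lT2 lT3; rewrite big_cop_op; under eq_bigr do rewrite big_cop_op /=.
  by rewrite -(coassoc _ (fun a b c => T c b a)) //; split.
split.
- exact: eps_lin.
- move=> V B x y [lB1 lB2].
  rewrite big_cop_op (cop_mul _ (fun a b => B b a) y x); last by split.
  rewrite exchange_big big_cop_op; apply: eq_bigr => p _; rewrite big_cop_op.
  by apply: eq_bigr => q _; rewrite /= !mulrcE.
- move=> V T h lT; rewrite coassoc_rev // big_cop_op.
  by under [RHS]eq_bigr do rewrite big_cop_op.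
- move=> V T [lT1 lT2 lT3].
  rewrite coassoc_rev ?(wunit _ (fun a b c => T c b a)); try by split.
  rewrite big_cop_op exchange_big; apply: eq_bigr => p _; rewrite big_cop_op.
  by apply: eq_bigr => q _; rewrite /= mulrcE.
- by move=> h; rewrite !big_cop_op; case: (counit h).
- move=> x y z; rewrite !big_cop_op /= !mulrcE mulrA.
  have [wc1 wc2] := weak_counit z y x; split; [rewrite -wc1|rewrite wc2].
  all: by apply: eq_bigr => p _; exact: mulrC.
Qed.
End Opposite.

Section OppositeRep.
Variables (k : fieldType) (H : algType k) (cop : H -> seq (H * H)) (S : H -> H).
Variables (A : algType k) (pi : H -> A).

Lemma partial_rep_op : coassociative cop -> lin_map S -> partial_rep cop S pi ->
  partial_rep (cop_op cop) (S : H^c -> H^c) (pi : H^c -> A^c).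
Proof.
move=> coassoc S_lin [pi_lin pi1 pr2 pr3 [pr4 pr5 pr6]].
split=> //; last split.
- by move=> h x; rewrite !big_cop_op; under eq_bigr do rewrite /= !mulrcE mulrA; rewrite pr5.
- by move=> h x; rewrite !big_cop_op; under eq_bigr do rewrite /= !mulrcE mulrA; rewrite pr4.
- by move=> h x; rewrite !big_cop_op; under eq_bigr do rewrite /= !mulrcE mulrA; rewrite pr3.
- by move=> h x; rewrite !big_cop_op; under eq_bigr do rewrite /= !mulrcE mulrA; rewrite pr2.
- move=> h; rewrite big_cop2 big_cop_op (pr6 h) big_cop2.
  rewrite (coassoc _ (fun a b c => pi a * pi (S b) * pi c)); last by multilinear.
  apply: eq_bigr => p _; rewrite big_cop_op; apply: eq_bigr => q _.
  by rewrite /= !mulrcE mulrA.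
Qed.
End OppositeRep.

Unset Implicit Arguments.

Theorem proposition3p3 (k : fieldType) (H : algType k)
  (cop : H -> seq (H * H)) (eps : H -> k) (S : H -> H)
  (A : algType k) (pi : H -> A) :
  weak_hopf cop eps S ->
  partial_rep cop S pi ->
  [<-> (forall h : H,
          \sum_(p <- cop h) pi p.1 * pi (S p.2) = pi (\sum_(p <- cop h) p.1 * S p.2)
          /\ pi (\sum_(p <- cop h) p.1 * S p.2) = pi (eps_t cop eps h));
       (forall h : H,
          \sum_(p <- cop h) pi (S p.1) * pi p.2 = pi (\sum_(p <- cop h) S p.1 * p.2)
          /\ pi (\sum_(p <- cop h) S p.1 * p.2) = pi (eps_s cop eps h));
       (pi 1 = 1 /\ forall x y : H, pi (x * y) = pi x * pi y)].
Proof.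
move=> wh pr; have wb := weak_hopf_bialgebra wh.
have [_ _ _ _ [S_lin _ _ _ [eps_tE eps_sE _]]] := wh.
have [pi_lin pi1 _ _ _] := pr.
have pi_sum (F G : H * H -> H) h : (forall x y, pi (x * y) = pi x * pi y) ->
    \sum_(p <- cop h) pi (F p) * pi (G p) = pi (\sum_(p <- cop h) F p * G p).
  by move=> pi_mul; rewrite (lin_map_sum pi_lin); under [RHS]eq_bigr do rewrite pi_mul.
tfae=> [P1 | P2 | [_ pi_mul] h].
- have pi_mul := multiplicative_of_eps_t wb S_lin pr (fun h => etrans (P1 h).1 (P1 h).2).
  by move=> h; split; [exact: (pi_sum (S \o fst) snd) | rewrite eps_sE].
- split=> // x y.
  apply: (multiplicative_of_eps_t (weak_bialgebra_op wb) S_lin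
            (partial_rep_op (wb_coassoc wb) S_lin pr) _ y x) => h.
  by rewrite big_cop_op eps_t_op -(P2 h).2 -(P2 h).1.
- by split; [exact: (pi_sum fst (S \o snd)) | rewrite eps_tE].
Qed.
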